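(* Let $\lambda\in P$, $\lhd\in\mathrm{RO}(\lambda,\Delta^+)$ and $w\in W$. For every $A\in\mathcal{A}(w,\Gamma)$ one has $\mathrm{wt}(A)=\mathrm{wt}(\Xi(A))$.
   Context: Let $\mathfrak{g}$ be a finite-dimensional complex simple Lie algebra with root system $\Delta$, positive roots $\Delta^+$, Weyl group $W$ with length function $\ell$ and reflections $s_\alpha$, weight lattice $P$, $\mathfrak{h}^*_{\mathbb{R}}=P\otimes_{\mathbb{Z}}\mathbb{R}$, pairing $\langle\cdot,\cdot\rangle$, $\alpha^\vee$ the coroot of $\alpha$, $\rho=\frac12\sum_{\alpha\in\Delta^+}\alpha$. For $\alpha\in\Delta$, $\operatorname{sgn}(\alpha)=\pm1$ according as $\alpha\in\pm\Delta^+$, and $|\alpha|=\operatorname{sgn}(\alpha)\alpha$. For $\alpha\in\Delta$, $k\in\mathbb{Z}$, the affine reflection $s_{\alpha,k}$ of $\mathfrak{h}^*_{\mathbb{R}}$ is $s_{\alpha,k}(\nu)=\nu-(\langle\nu,\alpha^\vee\rangle-k)\alpha$. For $\lambda\in P$, $\Delta^+(\lambda)_{>0}$, $\Delta^+(\lambda)_{=0}$, $\Delta^+(\lambda)_{<0}$ are the sets of $\alpha\in\Delta^+$ with $\langle\lambda,\alpha^\vee\rangle>0$, $=0$, $<0$. Quantum Bruhat graph $\mathrm{QBG}(W)$: vertices $W$; an edge $x\xrightarrow{\alpha}y$ ($\alpha\in\Delta^+$) whenever $y=xs_\alpha$ and either $\ell(y)=\ell(x)+1$ (Bruhat edge) or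 $\ell(y)=\ell(x)-2\langle\rho,\alpha^\vee\rangle+1$ (quantum edge). Reflection orders: a total order $\lhd$ on $\Delta^+$ is a reflection order if whenever $\alpha,\beta,\alpha+\beta\in\Delta^+$, either $\alpha\lhd\alpha+\beta\lhd\beta$ or $\beta\lhd\alpha+\beta\lhd\alpha$; $\mathrm{RO}(\lambda,\Delta^+)$ is the set of those with $\alpha\lhd\beta\lhd\gamma$ for $\alpha\in\Delta^+(\lambda)_{<0}$, $\beta\in\Delta^+(\lambda)_{=0}$, $\gamma\in\Delta^+(\lambda)_{>0}$. Fix such $\lhd$. Interpolated QLS paths: for $x,y\in W$, $\sigma\in\mathbb{Q}$, write $x\overset{(\lambda,+)}{\Longrightarrow}_\sigma y$ if there is a directed path $x=x_0\xrightarrow{\gamma_1}x_1\to\cdots\xrightarrow{\gamma_r}x_r=y$ in $\mathrm{QBG}(W)$ ($r\ge0$) with all $\gamma_k\in\Delta^+(\lambda)_{>0}$, $\gamma_{k+1}\lhd\gamma_k$ for all $k$, and $\sigma\langle\lambda,\gamma_k^\vee\rangle\in\mathbb{Z}$ for all $k$; $x\overset{(\lambda,-)}{\Longrightarrow}_\sigma y$ is defined identically with $\Delta^+(\lambda)_{<0}$ in place of $\Delta^+(\lambda)_{>0}$. An interpolated QLS path of shape $\lambda$ is a triple $\eta=(x_1,\dots,x_s;y_1,\dots,y_{s-1};\sigma_0,\dots,\sigma_s)$ ($s\ge1$) with $x_i,y_i\in W$, $x_i\ne x_{i+1}$, $y_i\ne y_{i+1}$, $\sigma_i\in\mathbb{Q}$,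 $0=\sigma_0<\sigma_1<\dots<\sigma_s=1$, and for $1\le i\le s-1$: $x_{i+1}\overset{(\lambda,-)}{\Longrightarrow}_{\sigma_i}y_i$ and $y_i\overset{(\lambda,+)}{\Longrightarrow}_{\sigma_i}x_i$. $\mathrm{IQLS}(\lambda)$ is the set of these; its weight is $\mathrm{wt}(\eta):=\sum_{k=1}^s(\sigma_k-\sigma_{k-1})x_k\lambda$. Affine data: real affine coroots $\gamma^\vee+k\tilde\delta$ ($\gamma\in\Delta$, $k\in\mathbb{Z}$, $\tilde\delta$ formal); for $\beta^\vee=\gamma^\vee+k\tilde\delta$ put $\overline{\beta^\vee}=\gamma^\vee$, $\overline\beta=\gamma$, $\deg(\beta^\vee)=k$; it is positive if $k>0$ or ($k=0$, $\gamma\in\Delta^+$), negative otherwise; $t_\lambda(\gamma^\vee+k\tilde\delta)=\gamma^\vee+(k-\langle\lambda,\gamma^\vee\rangle)\tilde\delta$; $\mathrm{Inv}(\lambda)$ is the set of positive real affine coroots $\beta^\vee$ with $t_\lambda(\beta^\vee)$ negative (for these, $\langle\lambda,\overline{\beta^\vee}\rangle>0$ and $\overline\beta\in\Delta^+(\lambda)_{>0}\sqcup(-\Delta^+(\lambda)_{<0})$); put $d(\beta^\vee)=\deg(\beta^\vee)/\langle\lambda,\overline{\beta^\vee}\rangle$. Order $\prec$ on $\Delta^+(\lambda)_{>0}\sqcup(-\Delta^+(\lambda)_{<0})$: elements of $\Delta^+(\lambda)_{>0}$ precede those of $-\Delta^+(\lambda)_{<0}$; $\gamma\prec\gamma'$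 iff $\gamma\lhd\gamma'$ on $\Delta^+(\lambda)_{>0}$; $-\alpha\prec-\alpha'$ iff $\alpha\lhd\alpha'$ on $-\Delta^+(\lambda)_{<0}$. Order $<$ on $\mathrm{Inv}(\lambda)$: $\beta^\vee<\beta'^\vee$ iff $d(\beta^\vee)<d(\beta'^\vee)$, or they are equal and $\overline{\beta'}\prec\overline\beta$. Write $\mathrm{Inv}(\lambda)=\{\beta_1^\vee<\dots<\beta_r^\vee\}$, $\gamma_k:=\overline{\beta_k}$, $d_k:=d(\beta_k^\vee)$, $l_k:=\deg(\beta_k^\vee)$, and $\Gamma:=(\gamma_1,\dots,\gamma_r)$. Admissible subsets: for $w\in W$, $\mathcal{A}(w,\Gamma)$ is the set of $A=\{j_1<\dots<j_p\}\subseteq\{1,\dots,r\}$ such that $w=u_0\xrightarrow{|\gamma_{j_1}|}u_1\to\cdots\xrightarrow{|\gamma_{j_p}|}u_p$ is a directed path in $\mathrm{QBG}(W)$, where $u_a:=ws_{|\gamma_{j_1}|}\cdots s_{|\gamma_{j_a}|}$; its weight is $\mathrm{wt}(A):=-w\,s_{\gamma_{j_1},-l_{j_1}}\cdots s_{\gamma_{j_p},-l_{j_p}}(-\lambda)$. One has $0\le d_{j_1}\le\dots\le d_{j_p}\le1$. The map $\Xi$: let $0<c_1<\dots<c_{t-1}<1$ ($t\ge1$) be the distinct values among $d_{j_1},\dots,d_{j_p}$ lying strictly between $0$ and $1$; put $c_0:=0$, $c_t:=1$. For $1\le a\le t$ let $m_a:=\#\{b\mid d_{j_b}<c_a\}$;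 for $1\le a\le t-1$ let $n_a:=m_a+\#\{b\mid m_a<b\le m_{a+1},\ \gamma_{j_b}\in-\Delta^+\}$. Then $\Xi(A):=(x_1,\dots,x_t;y_1,\dots,y_{t-1};\sigma_0,\dots,\sigma_t)$ with $x_i:=u_{m_{t+1-i}}$, $y_i:=u_{n_{t-i}}$, $\sigma_i:=1-c_{t-i}$; this lies in $\mathrm{IQLS}(\lambda)$. *)

(* Root system of a finite-dimensional complex simple Lie
   algebra, realized on h^*_Q = Q^n in the basis of simple roots. *)
From Stdlib Require Import ClassicalDescription.
From HB Require Import structures.
From mathcomp Require Import all_boot all_order all_algebra.

Set Implicit Arguments. Unset Strict Implicit. Unset Printing Implicit Defensive.
Import Order.TTheory GRing.Theory Num.Theory.
Local Open Scope ring_scope.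

Section RootSystem.
Variables (n : nat) (B : 'M[rat]_n) (roots : seq 'cV[rat]_n).

Local Notation vec := 'cV[rat]_n.
Local Notation mat := 'M[rat]_n.

Definition bil (u v : vec) : rat := (u^T *m B *m v) ord0 ord0.

(* <nu, alpha^vee> = 2 (alpha, nu) / (alpha, alpha) *)
Definition cop (nu a : vec) : rat := 2 * bil a nu / bil a a.

Definition reflM (a : vec) : mat := 1%:M - (2 / bil a a) *: (a *m (a^T *m B)).

Definition saff (a : vec) (k : rat) (nu : vec) : vec := nu - (cop nu a - k) *: a.

Definition sroot (i : 'I_n) : vec := delta_mx i ord0.

Definition irreducible_roots : Prop :=
  forall X Y : seq vec, perm_eq roots (X ++ Y) ->
    (forall a b, a \in X -> b \in Y -> bil a b = 0) -> X = [::] \/ Y = [::].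

(* reduced, irreducible, crystallographic root system in Q^n (with an
   invariant positive definite form B) whose simple roots (a base) are the
   standard basis vectors *)
Definition root_system : Prop :=
  [/\ (0 < n)%N, B^T = B, (forall v : vec, v != 0 -> 0 < bil v v),
      uniq roots & 0 \notin roots] /\
  [/\ (forall a b, a \in roots -> b \in roots -> reflM a *m b \in roots),
      (forall a b, a \in roots -> b \in roots -> cop b a \is a Num.int),
      (forall a (c : rat), a \in roots -> c *: a \in roots -> c = 1 \/ c = -1),
      irreducible_roots &
      (forall i, sroot i \in roots) /\
      (forall a, a \in roots ->
         (forall i, a i ord0 \is a Num.int) /\
         ((forall i, 0 <= a i ord0) \/ (forall i, a i ord0 <= 0)))].

Definition isPos (a : vec) : bool := [forall i, 0 <= a i ord0].
Definition posroots : seq vec := [seq a <- roots | isPos a].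
Definition absr (a : vec) : vec := if isPos a then a else - a.

Definition is_weight (lam : vec) : Prop :=
  forall a, a \in roots -> cop lam a \is a Num.int.

Definition wprod (t : seq 'I_n) : mat := foldr (fun i M => reflM (sroot i) *m M) 1%:M t.
Definition inW (w : mat) : Prop := exists t : seq 'I_n, w = wprod t.
Definition hasLen (w : mat) (k : nat) : bool := [exists t : k.-tuple 'I_n, wprod t == w].
Definition wlen (w : mat) : nat :=
  match excluded_middle_informative (exists k, hasLen w k) with
  | left h => ex_minn h
  | right _ => 0%N
  end.

Definition rho : vec := (1 / 2%:R) *: \sum_(a <- posroots) a.

Definition qbg_edge (x : mat) (a : vec) (y : mat) : Prop :=
  [/\ inW x, a \in posroots, y = x *m reflM a &
      (wlen y = (wlen x).+1 \/
       (wlen y)%:R = (wlen x)%:R - 2 * cop rho a + 1 :> rat)].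

Section Lambda.
Variables (lam : vec) (ord : seq vec).

Definition lhd (a b : vec) : bool := (index a ord < index b ord)%N.

Definition refl_order : Prop :=
  perm_eq ord posroots /\
  forall a b, a \in posroots -> b \in posroots -> a + b \in posroots ->
    (lhd a (a + b) && lhd (a + b) b) || (lhd b (a + b) && lhd (a + b) a).

Definition RO : Prop :=
  refl_order /\
  forall a b, a \in posroots -> b \in posroots ->
    (cop lam a < 0 /\ cop lam b = 0) \/ (cop lam a < 0 /\ 0 < cop lam b) \/
    (cop lam a = 0 /\ 0 < cop lam b) -> lhd a b.

(* real affine coroots gamma^vee + k delta, encoded as (gamma, k) *)
Definition aff_pos (g : vec) (k : rat) : bool := (0 < k) || ((k == 0) && isPos g).
(* degree of t_lambda (gamma^vee + k delta) *)
Definition tdeg (b : vec * int) : rat := b.2%:~R - cop lam b.1.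
Definition inInv (b : vec * int) : bool :=
  (b.1 \in roots) && aff_pos b.1 b.2%:~R && ~~ aff_pos b.1 (tdeg b).

(* a finite range of candidate degrees containing all members of Inv *)
Definition krange (g : vec) : seq int :=
  let K := (absz (numq (cop lam g))).+1 in
  [seq (i%:Z - K%:Z) | i <- iota 0 (K.*2.+1)%N].
Definition Inv_list : seq (vec * int) :=
  [seq b <- flatten [seq [seq (g, k) | k <- krange g] | g <- roots] | inInv b].

Definition dInv (b : vec * int) : rat := b.2%:~R / cop lam b.1.
Definition prec (g g' : vec) : bool :=
  if isPos g then (if isPos g' then lhd g g' else true)
  else (if isPos g' then false else lhd (- g) (- g')).
Definition ltInv (b b' : vec * int) : bool :=
  (dInv b < dInv b') || ((dInv b == dInv b') && prec b'.1 b.1).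
Definition leInv (b b' : vec * int) : bool := (b == b') || ltInv b b'.

Definition Inv_sorted : seq (vec * int) := sort leInv Inv_list.
Definition rr : nat := size Inv_sorted.
Definition betaI (k : nat) : vec * int := nth (0, 0) Inv_sorted k.  (* 0-based *)
Definition gam (k : nat) : vec := (betaI k).1.
Definition lk (k : nat) : int := (betaI k).2.
Definition dk (k : nat) : rat := dInv (betaI k).

Section Adm.
Variables (w : mat) (js : seq nat).  (* A = {j_1 < ... < j_p}, 0-based *)

Definition uAt (a : nat) : mat :=
  foldl (fun M j => M *m reflM (absr (gam j))) w (take a js).

Definition admissible : Prop :=
  [/\ sorted ltn js, all (fun j => j < rr)%N js &
      forall a, (a < size js)%N ->
        qbg_edge (uAt a) (absr (gam (nth 0%N js a))) (uAt a.+1)].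

Definition wtA : vec :=
  - (w *m foldr (fun j nu => saff (gam j) (- (lk j)%:~R) nu) (- lam) js).

Definition ds : seq rat := [seq dk j | j <- js].
Definition cs_inner : seq rat :=
  sort (fun x y : rat => x <= y) (undup [seq x <- ds | (0 < x) && (x < 1)]).
Definition tt : nat := (size cs_inner).+1.
Definition cc (a : nat) : rat := nth 0 (0 :: rcons cs_inner 1) a.
Definition mm (a : nat) : nat := count (fun x => x < cc a) ds.
Definition nn (a : nat) : nat :=
  (mm a + count (fun j => ~~ isPos (gam j)) (drop (mm a) (take (mm a.+1) js)))%N.

Definition Xi : seq mat * seq mat * seq rat :=
  ([seq uAt (mm (tt.+1 - i)) | i <- iota 1 tt],
   [seq uAt (nn (tt - i)) | i <- iota 1 tt.-1],
   [seq 1 - cc (tt - i) | i <- iota 0 tt.+1]).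
End Adm.
End Lambda.
End RootSystem.

(* weight of an interpolated QLS path (x_1..x_s; y_1..y_{s-1}; sigma_0..sigma_s) *)
Definition wtQLS (n : nat) (lam : 'cV[rat]_n)
    (eta : seq 'M[rat]_n * seq 'M[rat]_n * seq rat) : 'cV[rat]_n :=
  let: (xs, _, sig) := eta in
  \sum_(k < size xs) ((nth 0 sig k.+1 - nth 0 sig k) *: (nth 0 xs k *m lam)).

(* Since l_j = d_j <lam, gamma_j^vee>, each affine reflection is the linear
   reflection conjugated by the translation by d_j lam:
   s_{gamma,-l}(nu) = s_gamma(nu + d lam) - d lam.  Hence the composite in
   wt(A) telescopes to sum_b (d_{j_{b+1}} - d_{j_b}) u_b lam, with the
   conventions d_{j_0} = 0 and d_{j_{p+1}} = 1.  The d_{j_b} increase with b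
   (Inv(lam) is listed in increasing order), so grouping the terms by the
   distinct values c_a of the d_{j_b} kills the differences between equal
   values and leaves sum_a (c_a - c_{a-1}) u_{m_a} lam, which is wt(Xi(A)). *)
From HB Require Import structures.
From mathcomp Require Import all_boot all_order all_algebra.
From mathcomp Require Import lra zify.
Import Order.TTheory GRing.Theory Num.Theory.
Local Open Scope ring_scope.

Set Implicit Arguments. Unset Strict Implicit. Unset Printing Implicit Defensive.

Section LevelSums.
Variable V : lmodType rat.

Fixpoint chain_sum (lo : rat) (ds : seq rat) (F : nat -> V) : V :=
  match ds with
  | [::] => (1 - lo) *: F 0%N
  | d :: ds' => (d - lo) *: F 0%N + chain_sum d ds' (fun a => F a.+1)
  end.

Fixpoint level_sum (lo : rat) (cs ds : seq rat) (F : nat -> V) : V :=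
  match cs with
  | [::] => 0
  | c :: cs' => (c - lo) *: F (count (fun x => x < c) ds) + level_sum c cs' ds F
  end.

Definition levels_of (lo : rat) (ds cs : seq rat) : Prop :=
  path <%R lo cs /\
  forall x, (x \in cs) = (x == 1) || ((x \in ds) && (lo < x < 1)).

Lemma path_lt_min (lo : rat) cs : path <%R lo cs -> {in cs, forall x, lo < x}.
Proof. by move=> lo_cs; apply/allP; exact: order_path_min lt_trans lo_cs. Qed.

Lemma eq_chain_sum lo ds F G : F =1 G -> chain_sum lo ds F = chain_sum lo ds G.
Proof.
elim: ds lo F G => [|d ds IH] lo F G FG /=; first by rewrite FG.
by rewrite FG (IH _ _ (fun a => G a.+1)).
Qed.

Lemma chain_sum_from1 ds F : all (fun x => x == 1) ds -> chain_sum 1 ds F = 0.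
Proof.
elim: ds F => [|d ds IH] F /=; first by rewrite subrr scale0r.
by case/andP=> /eqP -> ds1; rewrite subrr scale0r add0r IH.
Qed.

Lemma level_sumE lo cs ds F : level_sum lo cs ds F =
  \sum_(i < size cs) (nth 0 cs i - nth 0 (lo :: cs) i) *:
     F (count (fun x => x < nth 0 cs i) ds).
Proof.
elim: cs lo => [|c cs IH] lo /=; first by rewrite big_ord0.
by rewrite big_ord_recl /= IH.
Qed.

Lemma level_sum_cons lo cs d ds F : {in cs, forall c, d < c} ->
  level_sum lo cs (d :: ds) F = level_sum lo cs ds (fun a => F a.+1).
Proof.
elim: cs lo => [|c cs IH] lo //= dcs.
by rewrite dcs ?mem_head // IH // => c' c'cs; rewrite dcs // in_cons c'cs orbT.
Qed.

Lemma levels_of_one lo ds cs :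
  all (fun x => 1 <= x) ds -> levels_of lo ds cs -> cs = [:: 1].
Proof.
move=> /allP ds_ge1 [lo_cs csE].
apply: lt_sorted_eq => //; first exact: path_sorted lo_cs.
move=> x; rewrite csE inE; case: eqVneq => //= _.
by apply/negbTE/negP => /and3P[/ds_ge1 x_ge1 _]; rewrite ltNge x_ge1.
Qed.

Lemma levels_of_cons_lo lo ds cs : levels_of lo (lo :: ds) cs -> levels_of lo ds cs.
Proof.
case=> lo_cs csE; split=> // x; rewrite csE in_cons.
by case: (eqVneq x lo) => [->|]; rewrite ?ltxx ?andbF ?orbF /=.
Qed.

Lemma levels_of_cons lo d ds cs : lo < d < 1 -> {in ds, forall x, d <= x} ->
  levels_of lo (d :: ds) cs -> exists2 cs', cs = d :: cs' & levels_of d ds cs'.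
Proof.
move=> /andP[lo_d d1] d_ds [lo_cs csE].
have d_cs : d \in cs by rewrite csE mem_head lo_d d1 orbT.
have cs_ge_d : {in cs, forall x, d <= x}.
  move=> x; rewrite csE in_cons => /orP[/eqP->|/andP[/predU1P[->|/d_ds] //]].
  exact: ltW.
case: cs lo_cs csE d_cs cs_ge_d => [//|c cs'] /= /andP[_ c_cs'] csE d_cs cs_ge_d.
have c_lt := path_lt_min c_cs'.
have cd : c = d.
  apply: le_anti; rewrite cs_ge_d ?mem_head // andbT.
  by move: d_cs; rewrite in_cons => /predU1P[->|/c_lt/ltW].
subst c; exists cs' => //; split=> // x.
have := csE x; rewrite !in_cons; case: eqVneq => [->|xd] /=.
  by rewrite ltxx andbF orbF (lt_eqF d1) => _; apply/negP => /c_lt; rewrite ltxx.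
move=> ->; case: eqVneq => //= _; case x_ds: (x \in ds) => //=.
have dx : d < x by rewrite lt_neqAle eq_sym xd d_ds.
by rewrite dx (lt_trans lo_d dx).
Qed.

Lemma chain_sum_levels lo ds cs F :
  sorted <=%R ds -> all (fun x => lo <= x <= 1) ds -> levels_of lo ds cs ->
  chain_sum lo ds F = level_sum lo cs ds F.
Proof.
elim: ds lo cs F => [|d ds IH] lo cs F.
  by move=> _ _ /(levels_of_one (isT : all _ [::])) -> /=; rewrite addr0.
rewrite /= (path_sortedE le_trans) => /andP[/allP d_ds ds_sorted].
case/andP=> /andP[lo_d d1] /allP ds_bnd cs_lev.
have count_d : count (fun x => x < d) ds = 0%N.
  by apply/eqP; rewrite eqn0Ngt -has_count; apply/hasPn => x /d_ds; rewrite -leNgt.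
have [d_eq1|d_neq1] := eqVneq d 1.
  subst d; have ds1 : all (fun x => x == 1) ds.
    apply/allP => x x_ds; rewrite eq_le d_ds // andbT.
    by case/andP: (ds_bnd x x_ds).
  rewrite (@levels_of_one lo (1 :: ds) cs) //=; last first.
    by apply/allP => x /d_ds.
  by rewrite count_d addr0 chain_sum_from1 // addr0.
have ds_bnd' : all (fun x => d <= x <= 1) ds.
  by apply/allP => x x_ds; rewrite d_ds //; case/andP: (ds_bnd x x_ds).
have [d_eqlo|d_neqlo] := eqVneq d lo.
  subst d; rewrite subrr scale0r add0r level_sum_cons; last first.
    by case: cs_lev => /path_lt_min.
  exact/IH/levels_of_cons_lo.
have lo_d_1 : lo < d < 1 by rewrite !lt_def d_neqlo eq_sym d_neq1 lo_d d1.
have [cs' -> cs'_lev] := levels_of_cons lo_d_1 d_ds cs_lev.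
rewrite /= ltxx add0n count_d level_sum_cons; last first.
  by case: cs'_lev => /path_lt_min.
by congr (_ + _); apply: IH.
Qed.

End LevelSums.

Section Reflections.
Variables (n : nat) (B : 'M[rat]_n).

Lemma reflM_mul (a nu : 'cV[rat]_n) : reflM B a *m nu = nu - cop B nu a *: a.
Proof.
rewrite /reflM mulmxBl mul1mx -scalemxAl -mulmxA [_ *m nu]mx11_scalar.
by rewrite mul_mx_scalar scalerA /cop /bil mulrAC.
Qed.

Lemma saffE (a : 'cV[rat]_n) k nu : saff B a k nu = reflM B a *m nu + k *: a.
Proof. by rewrite reflM_mul /saff scalerBl opprB addrA addrAC. Qed.

Lemma reflMN (a : 'cV[rat]_n) : reflM B (- a) = reflM B a.
Proof. by rewrite /reflM /bil [(- a)^T]raddfN /= !mulNmx !mulmxN !opprK. Qed.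

Lemma reflM_absr (a : 'cV[rat]_n) : reflM B (absr a) = reflM B a.
Proof. by rewrite /absr; case: isPos; rewrite ?reflMN. Qed.

Lemma saff_conj (a lam nu : 'cV[rat]_n) d :
  saff B a (- (d * cop B lam a)) nu = reflM B a *m (nu + d *: lam) - d *: lam.
Proof.
rewrite saffE mulmxDr -scalemxAr (reflM_mul a lam) scalerBr scalerA.
by rewrite addrA addrAC addrK scaleNr.
Qed.

End Reflections.

Section Roots.
Variables (n : nat) (B : 'M[rat]_n) (roots : seq 'cV[rat]_n).
Hypothesis RS : root_system B roots.

Lemma posroots_pos g : g \in roots -> isPos g -> g \in posroots roots.
Proof. by move=> g_root g_pos; rewrite mem_filter g_pos g_root. Qed.

Lemma posroots_neg g : g \in roots -> ~~ isPos g -> - g \in posroots roots.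
Proof.
case: RS => [[_ _ B_pos _ roots_n0] [refl_root _ _ _ [_ root_sign]]] g_root g_neg.
rewrite mem_filter; apply/andP; split.
  have [_ [g_ge0|g_le0]] := root_sign g g_root.
    by move/negP: g_neg; case; apply/forallP.
  by apply/forallP => i; rewrite mxE oppr_ge0.
have g_n0 : g != 0 by apply: contraNneq roots_n0 => <-.
have := refl_root g g g_root g_root.
rewrite reflM_mul /cop mulfK ?gt_eqF ?B_pos //.
by rewrite scaler_nat mulr2n opprD addrA subrr add0r.
Qed.

End Roots.

Lemma index_lt_total (T : eqType) (s : seq T) x y : x \in s -> x != y ->
  (index x s < index y s)%N || (index y s < index x s)%N.
Proof.
move=> x_s xy; case: ltngtP => // index_eq.
have y_s : y \in s by rewrite -index_mem -index_eq index_mem.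
by move/negP: xy; case; rewrite -(nth_index x x_s) index_eq nth_index.
Qed.

Section InversionOrder.
Variables (n : nat) (B : 'M[rat]_n) (roots : seq 'cV[rat]_n) (lam : 'cV[rat]_n)
  (ord : seq 'cV[rat]_n).
Hypotheses (RS : root_system B roots) (RO : refl_order roots ord).

Local Notation Inv := (Inv_list B roots lam).

Lemma Inv_root b : b \in Inv -> b.1 \in roots.
Proof. by rewrite mem_filter => /andP[/andP[/andP[]]]. Qed.

Lemma Inv_degree_bounds b : b \in Inv ->
  [/\ 0 < cop B lam b.1, 0 <= b.2%:~R :> rat & b.2%:~R <= cop B lam b.1].
Proof.
rewrite mem_filter /inInv /aff_pos /tdeg => /andP[/andP[/andP[_]]].
set k : rat := b.2%:~R; set c := cop B lam b.1.
case: (isPos b.1); rewrite ?andbT ?andbF ?orbF; last by rewrite -leNgt; split; lra.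
rewrite negb_or -leNgt => k_ge0 /andP[k_le_c k_neq_c].
have {}k_ge0 : 0 <= k by case/orP: k_ge0 => [/ltW|/eqP->].
by split; lra.
Qed.

Lemma prec_total g g' : g \in roots -> g' \in roots -> g != g' ->
  prec ord g g' || prec ord g' g.
Proof.
case: RO => ord_perm _ g_root g'_root gg'; rewrite /prec /lhd.
case g_pos: (isPos g); case g'_pos: (isPos g') => //=.
  by apply: index_lt_total => //; rewrite (perm_mem ord_perm) posroots_pos.
apply: index_lt_total; last by rewrite (inj_eq oppr_inj).
by rewrite (perm_mem ord_perm) (posroots_neg RS) ?g_pos.
Qed.

Lemma leInv_total : {in Inv &, total (leInv B lam ord)}.
Proof.
move=> b b' b_Inv b'_Inv; rewrite /leInv /ltInv.
have [lt|gt|d_eq] := ltrgtP (dInv B lam b) (dInv B lam b'); rewrite ?orbT //=.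
have [g_eq|g_neq] := eqVneq b.1 b'.1; last first.
  have := prec_total (Inv_root b_Inv) (Inv_root b'_Inv) g_neq.
  by case/orP=> ->; rewrite !orbT.
have [c_gt0 _ _] := Inv_degree_bounds b_Inv.
suff -> : b = b' by rewrite eqxx.
move: d_eq; rewrite /dInv -g_eq => /(mulIf (invr_neq0 (lt0r_neq0 c_gt0))) /intr_inj.
by case: b b' g_eq {b_Inv b'_Inv c_gt0} => [g k] [g' k'] /= -> ->.
Qed.

Lemma dInv_sorted : sorted <=%R (map (dInv B lam) (Inv_sorted B roots lam ord)).
Proof.
rewrite sorted_map; apply: sub_sorted (sort_sorted_in leInv_total (allss _)).
by move=> b b' /=; case/orP=> [/eqP->|/orP[/ltW|/andP[/eqP->]]].
Qed.

End InversionOrder.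

Section Weights.
Variables (n : nat) (B : 'M[rat]_n) (roots : seq 'cV[rat]_n) (lam : 'cV[rat]_n)
  (ord : seq 'cV[rat]_n).

Local Notation rr := (rr B roots lam ord).
Local Notation gam := (gam B roots lam ord).
Local Notation lk := (lk B roots lam ord).
Local Notation dk := (dk B roots lam ord).
Local Notation uAt := (uAt B roots lam ord).
Local Notation ds := (ds B roots lam ord).

Lemma betaI_Inv j : (j < rr)%N -> betaI B roots lam ord j \in Inv_list B roots lam.
Proof. by move=> j_lt; rewrite -(mem_sort (leInv B lam ord)) mem_nth. Qed.

Lemma dk_bounds j : (j < rr)%N -> 0 <= dk j <= 1.
Proof.
move/betaI_Inv/Inv_degree_bounds => [c_gt0 k_ge0 k_le_c].
by rewrite /dk /dInv divr_ge0 ?(ltW c_gt0) //= ler_pdivrMr // mul1r.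
Qed.

Lemma lk_dk j : (j < rr)%N -> (lk j)%:~R = dk j * cop B lam (gam j).
Proof.
by move/betaI_Inv/Inv_degree_bounds => [c_gt0 _ _]; rewrite divfK ?lt0r_neq0.
Qed.

Lemma ds_sorted js : root_system B roots -> refl_order roots ord ->
  sorted ltn js -> all (fun j => j < rr)%N js -> sorted <=%R (ds js).
Proof.
move=> RS RO js_sorted js_lt; apply: (homo_sorted_in _ js_lt js_sorted).
move=> i j i_lt j_lt ij; rewrite /dk /betaI -!(nth_map _ 0 (dInv B lam)) //.
have := sorted_leq_nth le_trans lexx 0 (dInv_sorted lam RS RO).
by apply; rewrite ?inE ?size_map // ltnW.
Qed.

Lemma fold_saff_chain_sum js w lo :
  {in js, forall j, (lk j)%:~R = dk j * cop B lam (gam j)} ->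
  - (w *m foldr (fun j nu => saff B (gam j) (- (lk j)%:~R) nu) (- lam) js
     + lo *: (w *m lam))
  = chain_sum lo (ds js) (fun a => uAt w js a *m lam).
Proof.
elim: js w lo => [|j js IH] w lo lk_js /=.
  by rewrite /uAt /= mulmxN scalerBl scale1r opprD opprK addrC.
rewrite lk_js ?mem_head // saff_conj mulmxBr !mulmxDr !mulmxA -!scalemxAr.
set G := fun a => uAt (w *m reflM B (gam j)) js a *m lam.
rewrite (eq_chain_sum _ _ (G := G)) => [|a]; last by rewrite /G /uAt /= reflM_absr.
rewrite -IH => [|j' j'_js]; last by rewrite lk_js // in_cons j'_js orbT.
by rewrite /uAt /= scalerBl opprD opprB addrAC.
Qed.

Lemma wtQLS_Xi w js : wtQLS lam (Xi B roots lam ord w js) =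
  level_sum 0 (rcons (cs_inner B roots lam ord js) 1) (ds js)
    (fun a => uAt w js a *m lam).
Proof.
rewrite level_sumE size_rcons /wtQLS /Xi /tt size_map size_iota.
set m := size _; rewrite (reindex_inj rev_ord_inj); apply: eq_bigr => i _.
have i_lt : (i < m.+1)%N := ltn_ord i.
rewrite [nat_of_ord (rev_ord i)]/= !(nth_map 0%N) ?size_iota; try lia.
rewrite !nth_iota; try lia.
have -> : (m.+1 - (0 + (m.+1 - i.+1).+1) = i)%N by lia.
have -> : (m.+1 - (0 + (m.+1 - i.+1)) = i.+1)%N by lia.
have -> : (m.+2 - (1 + (m.+1 - i.+1)) = i.+1)%N by lia.
by rewrite opprB addrC addrA subrK.
Qed.

Lemma levels_of_cs_inner js :
  levels_of 0 (ds js) (rcons (cs_inner B roots lam ord js) 1).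
Proof.
have mem_cs x : (x \in cs_inner B roots lam ord js) = (x \in ds js) && (0 < x < 1).
  by rewrite mem_sort mem_undup mem_filter andbC.
split=> [|x]; last by rewrite mem_rcons in_cons mem_cs.
rewrite rcons_path (path_sortedE lt_trans) lt_sorted_uniq_le sort_uniq undup_uniq.
rewrite (sort_sorted le_total) !andbT; apply/andP; split.
  by apply/allP => x; rewrite mem_cs => /and3P[].
have := mem_last 0 (cs_inner B roots lam ord js); rewrite in_cons.
by case/predU1P=> [->|]; rewrite ?mem_cs // => /and3P[].
Qed.

End Weights.

Theorem proposition5p10 (n : nat) (B : 'M[rat]_n) (roots : seq 'cV[rat]_n)
    (lam : 'cV[rat]_n) (ord : seq 'cV[rat]_n) (w : 'M[rat]_n) (js : seq nat) :
  root_system B roots ->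
  is_weight B roots lam ->
  RO B roots lam ord ->
  inW B w ->
  admissible B roots lam ord w js ->
  wtA B roots lam ord w js = wtQLS lam (Xi B roots lam ord w js).
Proof.
move=> RS _ [refl _] _ [js_sorted js_all _].
have js_lt := allP js_all.
have := fold_saff_chain_sum w 0 (fun j j_js => lk_dk (js_lt j j_js)).
rewrite scale0r addr0 /wtA => ->; rewrite wtQLS_Xi.
apply: chain_sum_levels; [exact: ds_sorted | | exact: levels_of_cs_inner].
by apply/allP => _ /mapP[j j_js ->]; exact: dk_bounds (js_lt j j_js).
Qed.
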